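(* Let $B$ be any closed Euclidean ball in $\mathbb R^n$, let $S^*$ be a regular simplex inscribed into $B$, and let $P^*:C(B)\to\Pi_1(\mathbb R^n)$ be the interpolation projector with nodes at the vertices of $S^*$. Define $\psi(t)=\frac{2\sqrt n}{n+1}\big(t(n+1-t)\big)^{1/2}+\big|1-\frac{2t}{n+1}\big|$ for $0\le t\le n+1$, and $a=\big\lfloor\frac{n+1}2-\frac{\sqrt{n+1}}2\big\rfloor$. Then $$\|P^*\|_B=\max\{\psi(a),\psi(a+1)\},\qquad \sqrt n\le\|P^*\|_B\le\sqrt{n+1}.$$ Moreover, $\|P^*\|_B=\sqrt n$ only for $n=1$, and $\|P^*\|_B=\sqrt{n+1}$ if and only if $\sqrt{n+1}$ is an integer.
   Context: $C(B)$ is the space of continuous functions on $B$ with sup norm; $\Pi_1(\mathbb R^n)$ is the space of polynomials of degree $\le1$. The interpolation projector with nodes $x^{(1)},\dots,x^{(n+1)}$ (vertices of a nondegenerate simplex) maps $f$ to the unique $p\in\Pi_1(\mathbb R^n)$ with $p(x^{(j)})=f(x^{(j)})$; $\|P\|_B$ is its operator norm. A simplex is inscribed into $B$ if its vertices lie on the boundary sphere of $B$. *)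

From HB Require Import structures.
From mathcomp Require Import all_boot all_order all_algebra.
From mathcomp Require Import all_classical all_reals all_analysis.
Set Implicit Arguments. Unset Strict Implicit. Unset Printing Implicit Defensive.
Import Order.TTheory GRing.Theory Num.Theory.
Import numFieldNormedType.Exports.
Local Open Scope classical_set_scope.
Local Open Scope ring_scope.

Section Defs.
Variables (R : realType) (n : nat).

Definition enorm (v : 'rV[R]_n) : R := Num.sqrt (\sum_(i < n) v ord0 i ^+ 2).

Definition cball (c : 'rV[R]_n) (r : R) : set 'rV[R]_n :=
  [set x | enorm (x - c) <= r].

Definition supnorm (B : set 'rV[R]_n) (f : 'rV[R]_n -> R) : R :=
  sup [set `|f x| | x in B].

Definition is_affine (p : 'rV[R]_n -> R) : Prop :=
  exists (a : R) (b : 'rV[R]_n), forall x, p x = a + \sum_(i < n) b ord0 i * x ord0 i.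

Definition nondegenerate (x : 'I_n.+1 -> 'rV[R]_n) : Prop :=
  row_free (\matrix_(i < n) (x (lift ord0 i) - x ord0)).

Definition regular_inscribed (c : 'rV[R]_n) (r : R) (x : 'I_n.+1 -> 'rV[R]_n) : Prop :=
  nondegenerate x /\
  (forall j, enorm (x j - c) = r) /\
  exists d : R, 0 < d /\ forall i j, i != j -> enorm (x i - x j) = d.

(* p = P f : the (unique, by nondegeneracy) affine interpolant of f at the nodes x *)
Definition interpolates (x : 'I_n.+1 -> 'rV[R]_n) (f p : 'rV[R]_n -> R) : Prop :=
  is_affine p /\ forall j, p (x j) = f (x j).

(* operator norm ||P||_B of the interpolation projector P : C(B) -> Pi_1 *)
Definition proj_norm (B : set 'rV[R]_n) (x : 'I_n.+1 -> 'rV[R]_n) : R :=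
  sup [set supnorm B p | p in
        [set p | exists f : 'rV[R]_n -> R,
           {within B, continuous f} /\ supnorm B f <= 1 /\ interpolates x f p]].

Definition psi (t : R) : R :=
  (2 * Num.sqrt (n%:R)) / (n.+1%:R) * Num.sqrt (t * (n.+1%:R - t))
  + `|1 - 2 * t / n.+1%:R|.

End Defs.

(* Put u_j = x_j - c.  Regularity makes the Gram matrix of the u_j equal to r^2 on the
   diagonal and to -r^2/n off it (n+1 vectors of R^n are linearly dependent), so the
   barycentric coordinates are explicit: bary_j y = 1/(n+1) + n <y - c, u_j> / ((n+1) r^2).
   The norm of the projector is the maximum over the ball of sum_j |bary_j y|, i.e. the
   maximum over sign patterns s with k minus signs of the affine function sum_j s_j bary_j.
   Since |sum_j s_j u_j|^2 = r^2 ((n+1)^2 - (n+1-2k)^2) / n, Cauchy-Schwarz shows that this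
   maximum is psi k, attained on the sphere; clipping the interpolant of s to [-1, 1] gives
   an admissible f realising it.  Finally, in the variable d = |n+1-2t|,
   (n+1) psi t = sqrt n sqrt((n+1)^2 - d^2) + d increases for d^2 <= n+1 and decreases
   afterwards, so over the integers the maximum sits at a or a+1; squaring,
   ((n+1) psi)^2 + (sqrt((n+1)^2 - d^2) - sqrt n d)^2 = (n+1)^3 gives the bounds and
   the cases of equality. *)

From Pilot Require Import Defs.
From HB Require Import structures.
From mathcomp Require Import all_boot all_order all_algebra.
From mathcomp Require Import all_classical all_reals all_analysis.
From mathcomp Require Import ring lra zify.
Import Order.TTheory GRing.Theory Num.Theory.
Import numFieldNormedType.Exports.
Local Open Scope classical_set_scope.
Local Open Scope ring_scope.

Set Implicit Arguments.
Unset Strict Implicit.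
Unset Printing Implicit Defensive.

Section PsiAnalysis.
Variables (R : realType) (n : nat).

Local Notation m := (n.+1%:R : R).
Local Notation sn := (Num.sqrt (n%:R : R)).
Local Notation sm := (Num.sqrt m).
Local Notation rho d := (Num.sqrt (m ^+ 2 - d ^+ 2)).

Definition psid (d : R) : R := sn * rho d + d.

Let m_gt0 : 0 < m := ltr0Sn R n.
Let mE : m = n%:R + 1 := esym (@natr1 R n).

Lemma psi_psid t : psi n t = psid `|m - 2 * t| / m.
Proof.
have mne : m != 0 by rewrite gt_eqF.
rewrite /psi /psid real_normK ?num_real //.
have -> : t * (m - t) = 2^-1 ^+ 2 * (m ^+ 2 - (m - 2 * t) ^+ 2) by field.
rewrite sqrtrM ?sqr_ge0 // sqrtr_sqr ger0_norm ?invr_ge0 ?ler0n //.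
have -> : 1 - 2 * t / m = (m - 2 * t) / m by field.
by rewrite normrM [`|m^-1|]ger0_norm ?invr_ge0 ?ler0n //; field.
Qed.

Lemma psiC t : psi n (m - t) = psi n t.
Proof. by rewrite !psi_psid -normrN; congr (psid `|_| / _); ring. Qed.

Lemma psid0 : psid 0 = m * sn.
Proof. by rewrite /psid expr0n subr0 sqrtr_sqr ger0_norm ?ler0n // addr0 mulrC. Qed.

Section Rho.
Variable d : R.
Hypothesis hd : 0 <= d <= m.

Lemma rho_sqr : rho d ^+ 2 = m ^+ 2 - d ^+ 2.
Proof. by case/andP: hd => ? ?; rewrite sqr_sqrtr //; nra. Qed.

Let snd_sqr : (sn * d) ^+ 2 = n%:R * d ^+ 2.
Proof. by rewrite exprMn sqr_sqrtr ?ler0n. Qed.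

Lemma rho_ge : (sn * d <= rho d) = (d ^+ 2 <= m).
Proof.
case/andP: hd => ? ?.
rewrite -(ler_pXn2r (_ : 0 < 2)%N) ?nnegrE ?mulr_ge0 ?sqrtr_ge0 //.
have := m_gt0; have := mE; rewrite rho_sqr snd_sqr => ? ?; apply/idP/idP => ?; nra.
Qed.

Lemma rho_le : (rho d <= sn * d) = (m <= d ^+ 2).
Proof.
case/andP: hd => ? ?.
rewrite -(ler_pXn2r (_ : 0 < 2)%N) ?nnegrE ?mulr_ge0 ?sqrtr_ge0 //.
have := m_gt0; have := mE; rewrite rho_sqr snd_sqr => ? ?; apply/idP/idP => ?; nra.
Qed.

Lemma psid_sqr : psid d ^+ 2 + (rho d - sn * d) ^+ 2 = m ^+ 3.
Proof.
have e : psid d ^+ 2 + (rho d - sn * d) ^+ 2 = (sn ^+ 2 + 1) * (rho d ^+ 2 + d ^+ 2).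
  by rewrite /psid; ring.
by rewrite e rho_sqr sqr_sqrtr ?ler0n // -mE; ring.
Qed.

End Rho.

Lemma psid_ge0 d : 0 <= d -> 0 <= psid d.
Proof. by move=> ?; rewrite addr_ge0 ?mulr_ge0 ?sqrtr_ge0. Qed.

Lemma psidB d1 d2 : 0 <= d1 <= m -> 0 <= d2 <= m ->
  (psid d2 - psid d1) * (rho d1 + rho d2) =
  (d2 - d1) * ((rho d1 - sn * d1) + (rho d2 - sn * d2)).
Proof.
move=> hd1 hd2.
have -> : (psid d2 - psid d1) * (rho d1 + rho d2) =
    sn * (rho d2 ^+ 2 - rho d1 ^+ 2) + (d2 - d1) * (rho d1 + rho d2).
  by rewrite /psid; ring.
by rewrite !rho_sqr //; ring.
Qed.

Lemma psid_lt d1 d2 : 0 <= d1 < d2 -> d2 ^+ 2 <= m -> psid d1 < psid d2.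
Proof.
move=> /andP[d1_ge0 lt_d12] d2m; have := mE; have ? := ler0n R n => ?.
have hd2 : 0 <= d2 <= m by apply/andP; split; nra.
have hd1 : 0 <= d1 <= m by apply/andP; split; lra.
have lt1 : sn * d1 < rho d1 by rewrite ltNge rho_le // -ltNge; nra.
have le2 : sn * d2 <= rho d2 by rewrite rho_ge.
have rho_gt0 : 0 < rho d1 + rho d2.
  by have := sqrtr_ge0 (m ^+ 2 - d2 ^+ 2); have := mulr_ge0 (sqrtr_ge0 n%:R) d1_ge0; lra.
rewrite -subr_gt0 -(pmulr_lgt0 _ rho_gt0) psidB // mulr_gt0 ?subr_gt0 //; lra.
Qed.

Lemma psid_le d1 d2 : 0 <= d1 <= d2 -> d2 ^+ 2 <= m -> psid d1 <= psid d2.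
Proof.
move=> /andP[d1_ge0 le_d12] d2m; have [->//|ne] := eqVneq d1 d2.
by apply/ltW/psid_lt; rewrite // d1_ge0 lt_neqAle ne.
Qed.

Lemma psid_ge d1 d2 : m <= d1 ^+ 2 -> 0 <= d1 <= d2 -> d2 <= m -> psid d2 <= psid d1.
Proof.
move=> md1 /andP[d1_ge0 le_d12] d2m; have [->//|ne] := eqVneq d1 d2.
have hd1 : 0 <= d1 <= m by apply/andP; split; lra.
have hd2 : 0 <= d2 <= m by apply/andP; split; lra.
have le1 : rho d1 <= sn * d1 by rewrite rho_le.
have le2 : rho d2 <= sn * d2 by rewrite rho_le //; nra.
have rho_gt0 : 0 < rho d1 + rho d2.
  have lt_d12 : d1 < d2 by rewrite lt_neqAle ne.
  have : 0 < rho d1 by rewrite sqrtr_gt0 subr_gt0; nra.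
  by have := sqrtr_ge0 (m ^+ 2 - d2 ^+ 2); lra.
rewrite -subr_le0 -(pmulr_lle0 _ rho_gt0) psidB // mulr_ge0_le0 ?subr_ge0 //; lra.
Qed.

Lemma psid_le_max d : 0 <= d <= m -> psid d <= m * sm.
Proof.
move=> hd; have := psid_sqr hd; have := sqr_ge0 (rho d - sn * d) => ? ?.
rewrite -(ler_pXn2r (_ : 0 < 2)%N) ?nnegrE ?psid_ge0 ?mulr_ge0 ?sqrtr_ge0 ?ler0n //;
  last by case/andP: hd.
by rewrite exprMn sqr_sqrtr ?ler0n //; lra.
Qed.

Lemma psid_eq_max d : 0 <= d <= m -> psid d = m * sm <-> d ^+ 2 = m.
Proof.
move=> hd; have e := psid_sqr hd; have m3 : (m * sm) ^+ 2 = m ^+ 3.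
  by rewrite exprMn sqr_sqrtr ?ler0n //; ring.
split=> [eq_max | dm].
  have /eqP : (rho d - sn * d) ^+ 2 = 0 by move: e; rewrite eq_max m3; lra.
  rewrite sqrf_eq0 subr_eq0 => /eqP {}e; apply/eqP; rewrite eq_le -rho_ge // -rho_le //.
  by rewrite e lexx.
have e0 : rho d - sn * d = 0.
  by apply/eqP; rewrite subr_eq0 eq_le rho_ge // rho_le // dm lexx.
move: e; rewrite e0 expr0n addr0 -m3 => /eqP.
rewrite eqrXn2 ?psid_ge0 ?mulr_ge0 ?sqrtr_ge0 ?ler0n //; first by move/eqP.
by case/andP: hd.
Qed.

End PsiAnalysis.

Section Peak.
Variables (R : realType) (n : nat).
Hypothesis n_ge1 : (1 <= n)%N.

Local Notation m := (n.+1%:R : R).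
Local Notation sn := (Num.sqrt (n%:R : R)).
Local Notation sm := (Num.sqrt m).
Local Notation t0 := (m / 2 - sm / 2).
Local Notation psi_at j := (@psi R n j%:R).

Let m_gt0 : 0 < m := ltr0Sn R n.
Let sm_sqr : sm ^+ 2 = m := sqr_sqrtr (ler0n R n.+1).

Let sm_gt1 : 1 < sm.
Proof. by rewrite -[X in X < _]sqrtr1 ltr_sqrt // ltr1n. Qed.

Lemma floor_psi_argmax : exists k : nat, Num.floor t0 = k%:Z /\ k%:R <= t0 < k%:R + 1.
Proof.
have h0 : 0 <= Num.floor t0 by rewrite floor_ge0; have := sm_gt1; have := sm_sqr; nra.
exists `|Num.floor t0|%N; rewrite gez0_abs //; split => //.
by have := floor_itv t0; rewrite -[Num.floor t0]gez0_abs // intrD.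
Qed.

Lemma psi_natE j : (j.*2 <= n.+1)%N -> psi_at j = psid n (m - 2 * j%:R) / m.
Proof.
move=> hj; rewrite psi_psid ger0_norm // subr_ge0.
by rewrite -natrM ler_nat mul2n.
Qed.

Variable k : nat.
Hypothesis hk : k%:R <= t0 < k%:R + 1.

Let da : R := m - 2 * k%:R.
Let db : R := m - 2 * k.+1%:R.

Let dbE : db = da - 2.
Proof. by rewrite /db /da -natr1; ring. Qed.

Let da_ge : sm <= da.
Proof. by case/andP: hk; rewrite /da; lra. Qed.

Let db_lt : db < sm.
Proof. by case/andP: hk; rewrite dbE /da; lra. Qed.

Lemma argmax_double_le : (k.*2.+2 <= n.+1)%N.
Proof.
rewrite -(ltr_nat R) -muln2 -natr1 natrM.
by have := da_ge; have := sm_gt1; rewrite /da; lra.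
Qed.

Let db_ge0 : 0 <= db.
Proof.
have := argmax_double_le; rewrite -(ler_nat R) -addn2 -muln2 natrD natrM /db -natr1.
lra.
Qed.

Let da_range : 0 <= da <= m.
Proof.
have := da_ge; have := sm_gt1; have := ler0n R k; rewrite /da => ? ? ?.
by apply/andP; split; lra.
Qed.

Let db_range : 0 <= db <= m.
Proof.
have := da_range; have := db_ge0; rewrite dbE => ? /andP[? ?].
by apply/andP; split; lra.
Qed.

Let da_sqr_ge : m <= da ^+ 2.
Proof. by have := da_ge; have := sm_gt1; have := sm_sqr; nra. Qed.

Let db_sqr_lt : db ^+ 2 < m.
Proof. by have := db_lt; have := db_ge0; have := sm_sqr; nra. Qed.

Let double_le : (k.*2 <= n.+1)%N := ltnW (ltnW argmax_double_le).

Let psi_k : psi_at k = psid n da / m.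
Proof. by rewrite psi_natE. Qed.

Let psi_k1 : psi_at k.+1 = psid n db / m.
Proof. by rewrite psi_natE // doubleS argmax_double_le. Qed.

Lemma psi_le_peak j : (j <= n.+1)%N -> psi_at j <= Num.max (psi_at k) (psi_at k.+1).
Proof.
wlog hj : j / (j.*2 <= n.+1)%N.
  move=> wlog_j hjm; have [|lt_m_2j] := leqP j.*2 n.+1; first by move/wlog_j; apply.
  rewrite -psiC -natrB //; apply: wlog_j; [clear -lt_m_2j; lia | exact: leq_subr].
move=> _; rewrite psi_natE // psi_k psi_k1 le_max !ler_pM2r ?invr_gt0 //.
have le_2j : 2 * j%:R <= m by rewrite -natrM ler_nat mul2n.
have [le_jk | lt_kj] := leqP j k.
- have : (j%:R : R) <= k%:R by rewrite ler_nat.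
  move=> le_jk'; apply/orP; left; apply: (psid_ge da_sqr_ge).
    by rewrite (andP da_range).1 /= /da; lra.
  by have := ler0n R j; lra.
- have : (k.+1%:R : R) <= j%:R by rewrite ler_nat.
  move=> le_kj'; apply/orP; right; apply: psid_le (ltW db_sqr_lt).
  by rewrite /db; apply/andP; split; lra.
Qed.

Let peakE : Num.max (psi_at k) (psi_at k.+1) = Num.max (psid n da) (psid n db) / m.
Proof. by rewrite psi_k psi_k1 maxr_pMl // invr_ge0 ler0n. Qed.

Lemma peak_ge : sn <= Num.max (psi_at k) (psi_at k.+1).
Proof.
rewrite peakE ler_pdivlMr // mulrC -psid0 le_max; apply/orP; right.
by apply: psid_le; [rewrite lexx db_ge0 | exact: ltW].
Qed.

Lemma peak_le : Num.max (psi_at k) (psi_at k.+1) <= sm.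
Proof. by rewrite peakE ler_pdivrMr // (mulrC sm) ge_max !psid_le_max. Qed.

Lemma peak_eq_sqrt_n : Num.max (psi_at k) (psi_at k.+1) = sn <-> n = 1%N.
Proof.
have k2 := argmax_double_le.
split=> [peak_sn | n1].
  apply/eqP; rewrite eqn_leq n_ge1 andbT leqNgt; apply/negP => n_ge2.
  suff : sn < Num.max (psi_at k) (psi_at k.+1) by rewrite peak_sn ltxx.
  rewrite peakE ltr_pdivlMr // mulrC -psid0 lt_max.
  have [e2 | ne2] := eqVneq k.*2.+2 n.+1.
    have hda : da = 2 by rewrite /da -e2 -doubleS -mul2n natrM -natr1; ring.
    have m4 : 4 <= m by rewrite ler_nat -e2; clear -e2 n_ge2; lia.
    by rewrite hda psid_lt ?lexx ?ltr0n // expr2; lra.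
  have db_gt0 : 0 < db.
    by rewrite /db subr_gt0 -natrM mul2n ltr_nat doubleS ltn_neqAle ne2 argmax_double_le.
  by apply/orP; right; rewrite psid_lt ?lexx ?db_gt0 // ltW.
have k0 : k = 0%N by move: k2; rewrite n1 !ltnS leqn0 double_eq0 => /eqP.
have hda : da = m by rewrite /da k0 mulr0 subr0.
have hdb : db = 0 by rewrite /db k0 n1; lra.
rewrite peakE hda hdb psid0 /psid subrr sqrtr0 mulr0 add0r n1 sqrtr1 mulr1.
by rewrite maxxx divff // gt_eqF.
Qed.

Lemma peak_eq_sqrt_m : Num.max (psi_at k) (psi_at k.+1) = sm <-> exists j : nat, sm = j%:R.
Proof.
have daE : da = (n.+1 - k.*2)%:R.
  by rewrite natrB // -mul2n natrM.
split=> [peak_sm | [j smj]].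
  have : Num.max (psid n da) (psid n db) = m * sm.
    by rewrite -peak_sm peakE mulrC divfK // gt_eqF.
  case: leP => _ e.
    by have := db_sqr_lt; rewrite ((psid_eq_max db_range).1 e) ltxx.
  exists (n.+1 - k.*2)%N; rewrite -daE -((psid_eq_max da_range).1 e) sqrtr_sqr.
  by rewrite ger0_norm //; case/andP: da_range.
have j2 : (j ^ 2 = n.+1)%N by apply/eqP; rewrite -(eqr_nat R) natrX -smj sm_sqr.
(* [da] is squeezed between [sm = j] and [sm + 2], and has the parity of [n.+1 = j ^ 2]. *)
have : (j <= n.+1 - k.*2 < j + 2)%N.
  by rewrite -(ler_nat R) -(ltr_nat R) natrD -daE -smj; move: da_ge db_lt; rewrite dbE; lra.
have [e | ne] := eqVneq (n.+1 - k.*2)%N j => [_ | hD].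
  apply/eqP; rewrite eq_le peak_le peakE ler_pdivlMr // le_max mulrC.
  by rewrite ((psid_eq_max da_range).2 _) ?lexx // daE e -smj.
have e : (n.+1 - k.*2 = j.+1)%N.
  case/andP: hD => j_le D_lt; apply/eqP; rewrite eqn_leq; apply/andP; split.
    by rewrite -ltnS -addn2.
  by rewrite ltn_neqAle eq_sym ne.
have := oddX j 2; rewrite j2 -(subnKC double_le) e oddD odd_double /=.
by case: (odd j).
Qed.

End Peak.

Section Dot.
Variables (R : realType) (n : nat).
Implicit Types u v w : 'rV[R]_n.

Definition dot u v : R := \sum_(i < n) u ord0 i * v ord0 i.

Lemma dotC u v : dot u v = dot v u.
Proof. by apply: eq_bigr => i _; rewrite mulrC. Qed.

Lemma dotBl u v w : dot (u - v) w = dot u w - dot v w.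
Proof. by rewrite /dot -sumrB; apply: eq_bigr => i _; rewrite !mxE mulrBl. Qed.

Lemma dotZl (a : R) u w : dot (a *: u) w = a * dot u w.
Proof. by rewrite /dot mulr_sumr; apply: eq_bigr => i _; rewrite mxE mulrA. Qed.

Lemma dotBr u v w : dot w (u - v) = dot w u - dot w v.
Proof. by rewrite dotC dotBl !(dotC w). Qed.

Lemma dotBB u v : dot (u - v) (u - v) = dot u u - 2 * dot u v + dot v v.
Proof. by rewrite dotBl !dotBr (dotC v u); ring. Qed.

Lemma dotZr (a : R) u w : dot w (a *: u) = a * dot w u.
Proof. by rewrite dotC dotZl dotC. Qed.

Lemma dot0l w : dot 0 w = 0.
Proof. by rewrite -(scale0r 0) dotZl mul0r. Qed.

Lemma dot_suml (I : finType) (F : I -> 'rV[R]_n) w :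
  dot (\sum_i F i) w = \sum_i dot (F i) w.
Proof.
by rewrite /dot exchange_big; apply: eq_bigr => j _; rewrite summxE mulr_suml.
Qed.

Lemma dot_sumr (I : finType) (F : I -> 'rV[R]_n) w :
  dot w (\sum_i F i) = \sum_i dot w (F i).
Proof. by rewrite dotC dot_suml; apply: eq_bigr => i _; rewrite dotC. Qed.

Lemma dot_ge0 u : 0 <= dot u u.
Proof. by apply: sumr_ge0 => i _; rewrite -expr2 sqr_ge0. Qed.

Lemma dot_eq0 u : (dot u u == 0) = (u == 0).
Proof.
apply/eqP/eqP => [u0 | ->]; last exact: dot0l.
apply/rowP => i; rewrite mxE; apply/eqP; rewrite -sqrf_eq0 expr2; apply/eqP.
by move: u0 => /psumr_eq0P; apply=> // j _; rewrite -expr2 sqr_ge0.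
Qed.

Lemma enormE u : enorm u = Num.sqrt (dot u u).
Proof. by congr Num.sqrt; apply: eq_bigr => i _; rewrite expr2. Qed.

Lemma enorm_ge0 u : 0 <= enorm u.
Proof. exact: sqrtr_ge0. Qed.

Lemma enorm0 : enorm (0 : 'rV[R]_n) = 0.
Proof. by rewrite enormE dot0l sqrtr0. Qed.

Lemma enormZ (a : R) u : enorm (a *: u) = `|a| * enorm u.
Proof.
by rewrite !enormE dotZl dotZr mulrA -expr2 sqrtrM ?sqr_ge0 // sqrtr_sqr.
Qed.

Lemma enorm_sqr u : enorm u ^+ 2 = dot u u.
Proof. by rewrite enormE sqr_sqrtr ?dot_ge0. Qed.

Lemma dot_le_enorm u v : dot u v <= enorm u * enorm v.
Proof.
have [-> | u0] := eqVneq u 0; first by rewrite dot0l mulr_ge0 ?enorm_ge0.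
have [-> | v0] := eqVneq v 0; first by rewrite dotC dot0l mulr_ge0 ?enorm_ge0.
have nu : 0 < enorm u by rewrite enormE sqrtr_gt0 lt_def dot_eq0 u0 dot_ge0.
have nv : 0 < enorm v by rewrite enormE sqrtr_gt0 lt_def dot_eq0 v0 dot_ge0.
have := dot_ge0 (enorm v *: u - enorm u *: v).
rewrite dotBl !dotBr !dotZl !dotZr (dotC v u) -!enorm_sqr => h.
rewrite -subr_ge0 -(pmulr_rge0 _ (mulr_gt0 nu nv)); nra.
Qed.

End Dot.

Section Topology.
Variables (R : realType) (n : nat).

Lemma continuous_sum (I : Type) (s : seq I) (F : I -> 'rV[R]_n -> R) :
  (forall i, continuous (F i)) -> continuous (fun y => \sum_(i <- s) F i y).
Proof. by move=> F_cont; apply: continuous_big => //; exact: add_continuous. Qed.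

Lemma affine_continuous (p : 'rV[R]_n -> R) : is_affine p -> continuous p.
Proof.
move=> [a [b pE]]; rewrite (funext pE) => y.
apply: continuousD; first exact: cst_continuous.
by apply: continuous_sum => i {}y; apply: continuousM;
  [exact: cst_continuous | exact: coord_continuous].
Qed.

Lemma enorm_continuous : continuous (@enorm R n).
Proof.
have -> : @enorm R n = Num.sqrt \o (fun v => \sum_(i < n) v ord0 i ^+ 2) by [].
move=> y; apply: continuous_comp; last exact: sqrt_continuous.
by apply: continuous_sum => i {}y; apply: continuousM; exact: coord_continuous.
Qed.

Lemma cball_compact (c : 'rV[R]_n) (r : R) : compact (cball c r).
Proof.
have cball_closed : closed (cball c r).
  rewrite (_ : cball c r = (fun y => enorm (y - c)) @^-1` [set t | t <= r]) //.
  apply: preimage_closed; last exact: closed_le.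
  move=> y _; apply: continuous_comp; last exact: enorm_continuous.
  by apply: continuousB; [exact: cvg_id | exact: cst_continuous].
apply: (subclosed_compact cball_closed
  (rV_compact (fun i => @segment_compact R (c ord0 i - r) (c ord0 i + r)))).
move=> y yB i /=; rewrite in_itv /=.
suff : `|(y - c) ord0 i| <= r by rewrite !mxE ler_norml => /andP[? ?]; apply/andP; split; lra.
apply: le_trans yB; rewrite -[X in X <= _]sqrtr_sqr enormE ler_sqrt ?dot_ge0 //.
by rewrite /dot (bigD1 i) //= -expr2 lerDl; apply: sumr_ge0 => j _; rewrite -expr2 sqr_ge0.
Qed.

Lemma bounded_on_compact (B : set 'rV[R]_n) (f : 'rV[R]_n -> R) : compact B ->
  {within B, continuous f} -> exists M, forall y, B y -> `|f y| <= M.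
Proof.
move=> B_compact f_cont.
have [M [M_real M_ub]] := compact_bounded (continuous_compact f_cont B_compact).
exists (`|M| + 1) => y By; apply: (M_ub (`|M| + 1)); last by exists y.
by have := real_ler_norm M_real; lra.
Qed.

End Topology.

Arguments cball_compact {R n} c r.

Section SupNorm.
Variables (R : realType) (n : nat) (B : set 'rV[R]_n).
Implicit Types f : 'rV[R]_n -> R.

Lemma supnorm_le f b : B !=set0 -> (forall y, B y -> `|f y| <= b) -> supnorm B f <= b.
Proof.
move=> [y0 By0] fb; apply: ge_sup; first by exists `|f y0|, y0.
by move=> _ [y By <-]; apply: fb.
Qed.

Lemma le_supnorm f y : (exists b, forall y, B y -> `|f y| <= b) -> B y ->
  `|f y| <= supnorm B f.
Proof.
move=> [b fb] By; apply: ub_le_sup; last by exists y.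
by exists b => _ [z Bz <-]; apply: fb.
Qed.

End SupNorm.

Section Affine.
Variables (R : realType) (n : nat) (x : 'I_n.+1 -> 'rV[R]_n).
(* Qualified: MathComp's [nondegenerate] (for sesquilinear forms) shadows it. *)
Hypothesis x_nondeg : Defs.nondegenerate x.

Lemma affine_eq_on_nodes (p q : 'rV[R]_n -> R) : is_affine p -> is_affine q ->
  (forall j, p (x j) = q (x j)) -> p =1 q.
Proof.
move=> [a [b pE]] [a' [b' qE]] pq_nodes y.
have hj j : (a - a') + dot (b - b') (x j) = 0.
  by have := pq_nodes j; rewrite pE qE dotBl /dot; lra.
pose M : 'M[R]_n := \matrix_(i < n) (x (lift ord0 i) - x ord0).
have M_unit : M \in unitmx by rewrite -row_free_unit.
have Mb : M *m (b - b')^T = 0.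
  apply/matrixP => i k; rewrite !mxE (ord1 k).
  transitivity (dot (b - b') (x (lift ord0 i) - x ord0)).
    by rewrite dotC; apply: eq_bigr => l _; rewrite !mxE.
  by rewrite dotBr; have := hj (lift ord0 i); have := hj ord0; lra.
have bb' : b - b' = 0.
  by apply: trmx_inj; rewrite trmx0 -(mulKmx M_unit (b - b')^T) Mb mulmx0.
have := hj ord0; rewrite bb' dot0l addr0 => /eqP; rewrite subr_eq0 => /eqP aa'.
by rewrite pE qE aa'; move/eqP: bb'; rewrite subr_eq0 => /eqP ->.
Qed.

End Affine.

Lemma sum_ord_ltn p q : (\sum_(j < p) (j < q : nat))%N = minn q p.
Proof.
elim: p => [|p IHp]; first by rewrite big_ord0 minn0.
by rewrite big_ord_recr /= IHp; case: (ltnP p q) => /=; lia.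
Qed.

Section RegularSimplex.
Variables (R : realType) (n : nat) (c : 'rV[R]_n) (r del : R) (x : 'I_n.+1 -> 'rV[R]_n).
Hypotheses (r_gt0 : 0 < r) (del_gt0 : 0 < del).
Hypothesis x_sphere : forall j, enorm (x j - c) = r.
Hypothesis x_equi : forall i j, i != j -> enorm (x i - x j) = del.
Hypothesis x_nondeg : Defs.nondegenerate x.

Local Notation m := (n.+1%:R : R).
Local Notation sn := (Num.sqrt (n%:R : R)).
Let u j := x j - c.

Let m_gt0 : 0 < m := ltr0Sn R n.

Let g : R := r ^+ 2 - del ^+ 2 / 2.

Lemma dot_vertex_diag j : dot (u j) (u j) = r ^+ 2.
Proof. by rewrite -enorm_sqr x_sphere. Qed.

Lemma dot_vertex_offdiag i j : i != j -> dot (u i) (u j) = g.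
Proof.
move=> ij; have := enorm_sqr (u i - u j).
rewrite dotBB !dot_vertex_diag /u opprB addrA subrK x_equi // /g.
lra.
Qed.

Lemma sum_dot_vertex (v : 'I_n.+1 -> R) i :
  \sum_j v j * dot (u j) (u i) = g * \sum_j v j + v i * (r ^+ 2 - g).
Proof.
rewrite (bigD1 i) //= (bigD1 i (P := xpredT)) //= dot_vertex_diag mulrDr.
rewrite (eq_bigr (fun j => v j * g)) -?mulr_suml; first ring.
by move=> j ji; rewrite dot_vertex_offdiag // eq_sym.
Qed.

(* The [n.+1] vectors [u j] of [R^n] are linearly dependent; pairing a dependence
   relation with each [u i] through [sum_dot_vertex] pins down [g]. *)
Lemma vertex_gram_offdiag : n%:R * g = - r ^+ 2.
Proof.
pose U : 'M[R]_(n.+1, n) := \matrix_(j, k) u j ord0 k.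
have K_neq0 : kermx U != 0.
  apply/negP => /eqP K0; have := mxrank_ker U; rewrite K0 mxrank0.
  by have := rank_leq_col U; lia.
have [j0 v_neq0] : exists j0, row j0 (kermx U) != 0.
  apply/existsP; apply: contraR K_neq0 => /existsPn row0K.
  by apply/eqP/row_matrixP => i; rewrite row0; apply/eqP/negPn/row0K.
pose v := row j0 (kermx U).
have vU : v *m U = 0 by rewrite /v -row_mul mulmx_ker row0.
have dep : \sum_j v ord0 j *: u j = 0.
  rewrite -[RHS]vU mulmx_sum_row.
  by apply: eq_bigr => j _; congr (_ *: _); apply/rowP => k; rewrite !mxE.
set S := \sum_j v ord0 j.
have D_gt0 : 0 < r ^+ 2 - g by rewrite /g; have := mulr_gt0 del_gt0 del_gt0; lra.
have E i : g * S + v ord0 i * (r ^+ 2 - g) = 0.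
  rewrite -sum_dot_vertex (eq_bigr (fun j => dot (v ord0 j *: u j) (u i))).
    by rewrite -dot_suml dep dot0l.
  by move=> j _; rewrite dotZl.
have S_neq0 : S != 0.
  apply: contra v_neq0 => /eqP S0; rewrite -/v; apply/eqP/rowP => i; rewrite [RHS]mxE.
  have /eqP := E i; rewrite S0 mulr0 add0r mulf_eq0 (gt_eqF D_gt0) orbF.
  by move/eqP.
have sumE : \sum_i (g * S + v ord0 i * (r ^+ 2 - g)) = 0 by rewrite big1.
rewrite big_split /= sumr_const card_ord -mulr_suml -/S -mulr_natl in sumE.
have : S * (m * g + (r ^+ 2 - g)) = 0 by rewrite -sumE; ring.
by move/eqP; rewrite mulf_eq0 (negbTE S_neq0) /= => /eqP; rewrite -natr1; lra.
Qed.

Let n_gt0 : 0 < n%:R :> R.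
Proof.
rewrite ltr0n lt0n; apply/negP => /eqP n0; have := vertex_gram_offdiag.
by rewrite n0 mul0r => /eqP; rewrite eq_sym oppr_eq0 sqrf_eq0 gt_eqF.
Qed.

Let g_val : g = - r ^+ 2 / n%:R.
Proof. by rewrite -vertex_gram_offdiag (mulrC n%:R) mulfK // gt_eqF. Qed.

Definition kappa : R := n%:R / (m * r ^+ 2).

Definition bary j (y : 'rV[R]_n) : R := m^-1 + kappa * dot (y - c) (u j).

Definition interp (v : 'I_n.+1 -> R) (y : 'rV[R]_n) : R := \sum_j v j * bary j y.

Lemma bary_vertex i j : bary j (x i) = (i == j)%:R.
Proof.
rewrite /bary /kappa -/(u i); have [<- | ij] := eqVneq i j.
  rewrite dot_vertex_diag /= -natr1; field.
  by rewrite !gt_eqF ?addr_gt0.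
rewrite dot_vertex_offdiag // g_val /= -natr1; field.
by rewrite !gt_eqF ?addr_gt0.
Qed.

Lemma interp_vertex v i : interp v (x i) = v i.
Proof.
rewrite /interp (bigD1 i) //= bary_vertex eqxx mulr1 big1 ?addr0 // => j ji.
by rewrite bary_vertex eq_sym (negbTE ji) mulr0.
Qed.

Lemma interp_affine v : is_affine (interp v).
Proof.
exists (\sum_j v j * (m^-1 - kappa * dot c (u j))), (\sum_j (v j * kappa) *: u j).
move=> y; rewrite -/(dot _ y) dot_suml /interp -big_split /=.
by apply: eq_bigr => j _; rewrite dotZl /bary dotBl (dotC y) (dotC c); ring.
Qed.

Section SignPattern.
Variable tau : 'I_n.+1 -> bool.

Definition sgn j : R := if tau j then 1 else -1.
Definition neg_count : nat := \sum_j ~~ tau j.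

Let ss := \sum_j sgn j.
Let w := \sum_j sgn j *: u j.

Lemma neg_count_le : (neg_count <= n.+1)%N.
Proof.
rewrite -[n.+1]card_ord -sum1_card; apply: leq_sum => j _.
by case: (tau j).
Qed.

Lemma sum_sgn : ss = m - 2 * neg_count%:R.
Proof.
have -> : m = \sum_(j < n.+1) 1 by rewrite sumr_const card_ord.
rewrite /ss /neg_count natr_sum mulr_sumr -sumrB.
by apply: eq_bigr => j _; rewrite /sgn; case: (tau j) => /=; ring.
Qed.

Lemma dot_sgn_vec : dot w w = r ^+ 2 * (m ^+ 2 - ss ^+ 2) / n%:R.
Proof.
have -> : dot w w = \sum_i sgn i * \sum_j sgn j * dot (u j) (u i).
  rewrite /w dot_suml; apply: eq_bigr => i _; rewrite dotZl dot_sumr.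
  by congr (_ * _); apply: eq_bigr => j _; rewrite dotZr dotC.
have sgn2 j : sgn j * sgn j = 1 by rewrite /sgn; case: (tau j); rewrite ?mulr1 ?mulrNN ?mulr1.
rewrite (eq_bigr (fun i => sgn i * (g * ss) + (r ^+ 2 - g))); last first.
  by move=> i _; rewrite sum_dot_vertex -/ss mulrDr [sgn i * (sgn i * _)]mulrA sgn2 mul1r.
rewrite big_split /= -mulr_suml -/ss sumr_const card_ord -mulr_natl g_val -natr1.
by field; rewrite gt_eqF.
Qed.
Lemma sum_sgn_sqr_le : ss ^+ 2 <= m ^+ 2.
Proof.
have := dot_ge0 w; rewrite dot_sgn_vec pmulr_lge0 ?invr_gt0 // pmulr_rge0 ?exprn_gt0 //.
by rewrite subr_ge0.
Qed.

Lemma sum_sgn_bary y : \sum_j sgn j * bary j y = ss / m + kappa * dot (y - c) w.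
Proof.
rewrite /w dot_sumr mulr_sumr /ss mulr_suml -big_split /=.
by apply: eq_bigr => j _; rewrite dotZr /bary; ring.
Qed.

Lemma kappa_enorm_sgn_vec : kappa * (r * enorm w) = sn * Num.sqrt (m ^+ 2 - ss ^+ 2) / m.
Proof.
have X_ge0 : 0 <= m ^+ 2 - ss ^+ 2 by rewrite subr_ge0 sum_sgn_sqr_le.
have key : n%:R * enorm w = r * (sn * Num.sqrt (m ^+ 2 - ss ^+ 2)).
  apply: (@pexpIrn _ 2) => //; rewrite ?nnegrE ?mulr_ge0 ?sqrtr_ge0 ?enorm_ge0 ?ltW //.
  rewrite !exprMn enorm_sqr !sqr_sqrtr ?ler0n // dot_sgn_vec.
  by field; rewrite gt_eqF.
have -> : kappa * (r * enorm w) = n%:R * enorm w / (m * r).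
  by rewrite /kappa; field; rewrite !gt_eqF.
by rewrite key; field; rewrite !gt_eqF.
Qed.

Lemma sum_sgn_bary_le y : cball c r y -> \sum_j sgn j * bary j y <= psi n neg_count%:R.
Proof.
move=> yB; rewrite sum_sgn_bary psi_psid -sum_sgn -/ss /psid real_normK ?num_real //.
rewrite mulrDl addrC.
apply: lerD; last by rewrite ler_pM2r ?invr_gt0 // ler_norm.
rewrite -kappa_enorm_sgn_vec; apply: ler_wpM2l.
  by rewrite /kappa divr_ge0 ?mulr_ge0 ?ler0n ?sqr_ge0 ?ltW.
by apply: le_trans (dot_le_enorm _ _) _; apply: ler_wpM2r; [exact: enorm_ge0 | exact: yB].
Qed.

Lemma sum_sgn_bary_attained :
  0 <= ss -> exists2 y, cball c r y & \sum_j sgn j * bary j y = psi n neg_count%:R.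
Proof.
move=> ss_ge0; pose z := if w == 0 then 0 else (r / enorm w) *: w.
have w_gt0 : w != 0 -> 0 < enorm w.
  by move=> w0; rewrite enormE sqrtr_gt0 lt_def dot_eq0 w0 dot_ge0.
exists (c + z).
  rewrite /cball /= (addrC c) addrK /z; case: eqP => [_ | /eqP w0].
    by rewrite enorm0 ltW.
  have wn0 : enorm w != 0 by rewrite gt_eqF ?w_gt0.
  by rewrite enormZ ger0_norm ?divfK // divr_ge0 ?ltW ?w_gt0.
have dot_zw : dot z w = r * enorm w.
  rewrite /z; case: eqP => [-> | /eqP w0]; first by rewrite dot0l enorm0 mulr0.
  by rewrite dotZl -enorm_sqr expr2 mulrA divfK // gt_eqF ?w_gt0.
rewrite sum_sgn_bary (addrC c) addrK dot_zw kappa_enorm_sgn_vec.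
by rewrite psi_psid -sum_sgn -/ss ger0_norm // /psid mulrDl addrC.
Qed.

End SignPattern.

(* [sum_j |bary j y|] is the value at [y] of the interpolant of the sign pattern of the
   [bary j y], and [psi] bounds such values. *)
Lemma interp_le v (M : R) y : cball c r y -> (forall j, `|v j| <= 1) ->
  (forall N, (N <= n.+1)%N -> psi n N%:R <= M) -> `|interp v y| <= M.
Proof.
move=> yB v1 psiM; pose tau j := 0 <= bary j y.
apply: le_trans (ler_norm_sum _ _ _) _.
apply: le_trans (psiM _ (neg_count_le tau)); apply: le_trans (sum_sgn_bary_le tau yB).
apply: ler_sum => j _; rewrite normrM.
have -> : sgn tau j * bary j y = `|bary j y|.
  rewrite /sgn /tau; case: ifP => h; first by rewrite mul1r ger0_norm.
  by rewrite ltr0_norm ?mulN1r // real_ltNge ?num_real // h.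
by rewrite ler_piMl // normr_ge0.
Qed.

Lemma interp_sgn_attained k : (k.*2 <= n.+1)%N ->
  exists2 y, cball c r y & interp (sgn (fun j : 'I_n.+1 => (k <= j)%N)) y = psi n k%:R.
Proof.
move=> k2; pose tau j : bool := (k <= j)%N.
have count_k : neg_count tau = k.
  rewrite /neg_count (eq_bigr (fun j : 'I_n.+1 => (j < k)%N : nat)) => [|j _].
    by rewrite sum_ord_ltn; apply/minn_idPl; lia.
  by rewrite /tau -ltnNge.
have ss_ge0 : 0 <= \sum_j sgn tau j.
  by rewrite sum_sgn count_k subr_ge0 -natrM ler_nat mul2n.
by have := sum_sgn_bary_attained ss_ge0; rewrite count_k.
Qed.

Let center_in_ball : cball c r c.
Proof. by rewrite /cball /= subrr enorm0 ltW. Qed.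

Lemma supnorm_interpolant_le (M : R) (f p : 'rV[R]_n -> R) :
  (forall N, (N <= n.+1)%N -> psi n N%:R <= M) ->
  {within cball c r, continuous f} -> supnorm (cball c r) f <= 1 -> interpolates x f p ->
  supnorm (cball c r) p <= M.
Proof.
move=> psiM f_cont f1 [p_aff p_nodes].
have pE : p =1 interp (fun j => f (x j)).
  apply: (affine_eq_on_nodes x_nondeg) => //; first exact: interp_affine.
  by move=> j; rewrite interp_vertex p_nodes.
apply: supnorm_le; first by exists c.
move=> y yB; rewrite pE; apply: interp_le => // j; apply: le_trans f1.
apply: le_supnorm (bounded_on_compact (cball_compact c r) f_cont) _.
by rewrite /cball /= x_sphere.
Qed.

Lemma proj_norm_regular (M : R) :
  (forall N, (N <= n.+1)%N -> psi n N%:R <= M) ->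
  (exists2 k, (k.*2 <= n.+1)%N & psi n k%:R = M) ->
  proj_norm (cball c r) x = M.
Proof.
move=> psiM [k k2 psikM].
pose v := sgn (fun j : 'I_n.+1 => (k <= j)%N).
have v1 j : `|v j| <= 1 by rewrite /v /sgn; case: ifP; rewrite ?normrN normr1.
(* Clipping the interpolant of the sign pattern to [-1, 1] keeps its nodal values. *)
pose f := (fun=> -1) \max ((fun=> 1) \min interp v).
have f_adm : {within cball c r, continuous f} /\ supnorm (cball c r) f <= 1 /\
    interpolates x f (interp v).
  split; [|split].
  - apply: continuous_subspaceT => y; apply: continuous_max; first exact: cst_continuous.
    by apply: continuous_min; [exact: cst_continuous | exact/affine_continuous/interp_affine].
  - apply: supnorm_le; first by exists c.
    by move=> y _; rewrite ler_norml le_max lexx ge_max ge_min lexx /=; lra.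
  - split=> [|j]; first exact: interp_affine.
    rewrite /f /= interp_vertex /v /sgn; case: ifP => _.
      by rewrite minxx max_r //; lra.
    by rewrite min_r ?maxxx //; lra.
have interp_vM : supnorm (cball c r) (interp v) = M.
  apply/le_anti/andP; split.
    by apply: supnorm_le; [exists c | move=> y yB; apply: interp_le].
  rewrite -psikM; have [y yB <-] := interp_sgn_attained k2.
  apply: le_trans (ler_norm _) (le_supnorm _ yB).
  by exists M => z zB; apply: interp_le.
apply/le_anti/andP; split.
  apply: ge_sup; first by exists M, (interp v) => //; exists f.
  by move=> _ [p [h [h_cont [h1 hp]]] <-]; apply: supnorm_interpolant_le hp.
apply: ub_le_sup; last by exists (interp v) => //; exists f.
by exists M => _ [p [h [h_cont [h1 hp]]] <-]; apply: supnorm_interpolant_le hp.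
Qed.

End RegularSimplex.

Theorem theorem11p2 (R : realType) (n : nat) (hn : (1 <= n)%N)
    (c : 'rV[R]_n) (r : R) (hr : 0 < r) (x : 'I_n.+1 -> 'rV[R]_n)
    (hx : regular_inscribed c r x) :
  let N := proj_norm (cball c r) x in
  let a : int := Num.floor (n.+1%:R / 2 - Num.sqrt (n.+1%:R) / 2 : R) in
  N = Num.max (psi n (a%:~R)) (psi n ((a + 1)%:~R)) /\
  Num.sqrt (n%:R) <= N <= Num.sqrt (n.+1%:R) /\
  (N = Num.sqrt (n%:R) <-> n = 1%N) /\
  (N = Num.sqrt (n.+1%:R) <-> exists k : nat, Num.sqrt (n.+1%:R) = (k%:R : R)).
Proof.
move=> N a; case: hx => x_nondeg [x_sphere [del [del_gt0 x_equi]]].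
have [k [a_k hk]] := floor_psi_argmax R hn.
have k2 := argmax_double_le hn hk.
have -> : Num.max (psi n a%:~R) (psi n (a + 1)%:~R) = Num.max (psi n k%:R) (psi n k.+1%:R).
  by rewrite /a a_k -PoszD addn1.
have -> : N = Num.max (psi n k%:R) (psi n k.+1%:R).
  apply: (proj_norm_regular hr del_gt0 x_sphere x_equi x_nondeg).
    by move=> j; apply: psi_le_peak.
  by case: leP => _; [exists k.+1; rewrite ?doubleS | exists k; first exact: ltnW (ltnW k2)].
split=> //; split; first by rewrite peak_ge ?peak_le.
by split; [apply: peak_eq_sqrt_n | apply: peak_eq_sqrt_m].
Qed.
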